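(* A posheaf $F$ on a locale $X$ is complete if and only if its opposite posheaf $F^{op}$ is complete.
   Context: Let $X$ be a locale with frame of opens $\mathcal{O}(X)$. A posheaf on $X$ is a sheaf of sets $F$ with (POS1) each $F(u)$ a poset; (POS2) restriction maps $F(u)\to F(v)$, $x\mapsto x|_v$ ($v\le u$), order-preserving; (POS3) if $u=\bigvee_i u_i$ and $s,t\in F(u)$ satisfy $s|_{u_i}\le t|_{u_i}$ for all $i$, then $s\le t$. $F^{op}$ has the same underlying sheaf with $F^{op}(u)=F(u)^{op}$. A point of $F$ is a morphism $p:\hat1\to F$ with $\hat1$ a subsheaf of the terminal sheaf, identified with an element of $F(\mathrm{dom}(p))$ where $\mathrm{dom}(p)$ is the largest open $u$ with $\hat1(u)\ne\emptyset$; points are ordered by $p_1\le p_2$ iff $\mathrm{dom}(p_1)\le\mathrm{dom}(p_2)$ and $p_1\le p_2|_{\mathrm{dom}(p_1)}$. For $u\in\mathcal{O}(X)$, $F^u$ is the restriction of $F$ to $\downarrow u$. A downsheaf is a subsheaf $G$ with each $G(v)$ a down-set of $F(v)$; $\mathbb{D}F(u)$ is the set of downsheaves of $F^u$, ordered by inclusion, with restriction to smaller opens; $\downarrow:F\to\mathbb{D}F$ sends $z\in F(u)$ to the downsheaf $v\mapsto\{y\in F(v)\mid y\le z|_v\}$ ($v\le u$). For order-preserving $\alpha,\beta$, $\alpha\dashv\beta$ means $\alpha x\le y\iff x\le\beta y$ for all points. $F$ is complete if $\downarrow:F\to\mathbb{D}F$ has a left adjoint. *)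

From Stdlib Require Import Classical.
Set Implicit Arguments.

(** * Frames (= locales, via their frame of opens) *)
Record Frame := {
  fO :> Type;
  fle : fO -> fO -> Prop;
  fle_refl : forall a, fle a a;
  fle_trans : forall a b c, fle a b -> fle b c -> fle a c;
  fle_antisym : forall a b, fle a b -> fle b a -> a = b;
  fsup : (fO -> Prop) -> fO;
  fsup_ub : forall (S : fO -> Prop) a, S a -> fle a (fsup S);
  fsup_least : forall (S : fO -> Prop) b, (forall a, S a -> fle a b) -> fle (fsup S) b;
  fmeet : fO -> fO -> fO;
  fmeet_l : forall a b, fle (fmeet a b) a;
  fmeet_r : forall a b, fle (fmeet a b) b;
  fmeet_glb : forall a b c, fle c a -> fle c b -> fle c (fmeet a b);
  fdistr : forall a (S : fO -> Prop),
      fmeet a (fsup S) = fsup (fun w => exists s, S s /\ w = fmeet a s)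
}.

Arguments fle {_} _ _.
Arguments fsup {_} _.

Definition is_join {X : Frame} {I : Type} (f : I -> X) (u : X) : Prop :=
  u = fsup (fun w => exists i, f i = w).

Lemma is_join_le {X : Frame} {I : Type} (f : I -> X) (u : X) :
  is_join f u -> forall i, fle (f i) u.
Proof. intros -> i. apply fsup_ub. eauto. Qed.

Unset Implicit Arguments.
Record Posheaf (X : Frame) := {
  sF :> X -> Type;
  res : forall (u v : X), fle v u -> sF u -> sF v;
  res_id : forall u (H : fle u u) x, res u u H x = x;
  res_comp : forall u v w (H1 : fle v u) (H2 : fle w v) (H3 : fle w u) x,
      res v w H2 (res u v H1 x) = res u w H3 x;
  glue : forall (I : Type) (f : I -> X) (u : X) (Hu : is_join f u)
           (s : forall i, sF (f i)),
      (forall i j w (Hi : fle w (f i)) (Hj : fle w (f j)),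
          res (f i) w Hi (s i) = res (f j) w Hj (s j)) ->
      exists x : sF u, (forall i, res u (f i) (is_join_le Hu i) x = s i) /\
        (forall y : sF u, (forall i, res u (f i) (is_join_le Hu i) y = s i) -> y = x);
  pleF : forall u, sF u -> sF u -> Prop;
  ple_refl : forall u x, pleF u x x;
  ple_trans : forall u x y z, pleF u x y -> pleF u y z -> pleF u x z;
  ple_antisym : forall u x y, pleF u x y -> pleF u y x -> x = y;
  res_mono : forall u v (H : fle v u) x y, pleF u x y -> pleF v (res u v H x) (res u v H y);
  pos3 : forall (I : Type) (f : I -> X) (u : X) (Hu : is_join f u) (s t : sF u),
      (forall i, pleF (f i) (res u (f i) (is_join_le Hu i) s) (res u (f i) (is_join_le Hu i) t)) ->
      pleF u s t
}.

Set Implicit Arguments.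
Arguments res {X} _ {u v} _ _.
Arguments pleF {X} _ {u} _ _.

Definition Pop (X : Frame) (F : Posheaf X) : Posheaf X.
Proof.
  refine {| sF := F; res := @res X F; res_id := @res_id X F;
            res_comp := @res_comp X F; glue := @glue X F;
            pleF := fun u x y => pleF F y x |}.
  - intros u x. apply ple_refl.
  - intros u x y z H1 H2. eapply ple_trans; eauto.
  - intros u x y H1 H2. apply ple_antisym; auto.
  - intros u v H x y H1. apply res_mono; auto.
  - intros I f u Hu s t H. eapply pos3; eauto.
Defined.

Definition point (X : Frame) (F : Posheaf X) := { u : X & F u }.

Definition point_le (X : Frame) (F : Posheaf X) (p q : point F) : Prop :=
  exists H : fle (projT1 p) (projT1 q),
    pleF F (projT2 p) (res F H (projT2 q)).

(** * Downsheaves: subsheaves of F^u with each G(v) a down-set *)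
Record Downsheaf (X : Frame) (F : Posheaf X) (u : X) := {
  ds :> forall v : X, F v -> Prop;
  ds_dom : forall v x, ds v x -> fle v u;
  ds_res : forall v w (H : fle w v) x, ds v x -> ds w (res F H x);
  ds_glue : forall (I : Type) (f : I -> X) (v : X) (Hv : is_join f v) (x : F v),
      (forall i, ds (f i) (res F (is_join_le Hv i) x)) -> ds v x;
  ds_down : forall v x y, pleF F y x -> ds v x -> ds v y
}.

Definition ds_incl (X : Frame) (F : Posheaf X) (u : X) (G H : Downsheaf F u) : Prop :=
  forall v x, G v x -> H v x.

Definition ds_restr {X : Frame} {F : Posheaf X} {u v : X} (Hvu : fle v u)
  (G : Downsheaf F u) : Downsheaf F v.
Proof.
  refine {| ds := fun t x => G t x /\ fle t v |}.
  - intros t x [_ H]. exact H.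
  - intros t w H x [Gx Ht]. split.
    + apply ds_res; auto.
    + eapply fle_trans; eauto.
  - intros I f t Ht x Hx. split.
    + apply (ds_glue G Ht). intros i. apply Hx.
    + rewrite Ht. apply fsup_least. intros a [i <-]. apply Hx.
  - intros t x y Hyx [Gx Ht]. split; auto. eapply ds_down; eauto.
Defined.

Definition dpoint (X : Frame) (F : Posheaf X) := { u : X & Downsheaf F u }.

Definition dpoint_le (X : Frame) (F : Posheaf X) (p q : dpoint F) : Prop :=
  exists H : fle (projT1 p) (projT1 q),
    ds_incl (projT2 p) (ds_restr H (projT2 q)).

Definition down {X : Frame} {F : Posheaf X} {u : X} (z : F u) : Downsheaf F u.
Proof.
  refine {| ds := fun t x => exists H : fle t u, pleF F x (res F H z) |}.
  - intros t x [H _]. exact H.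
  - intros t w Hwt x [H Hx].
    assert (Hw : fle w u) by (eapply fle_trans; eauto).
    exists Hw. rewrite <- (@res_comp X F _ _ _ H Hwt Hw). apply res_mono. exact Hx.
  - intros I f t Ht x Hx.
    assert (Htu : fle t u).
    { rewrite Ht. apply fsup_least. intros a [i <-]. destruct (Hx i) as [H _]. exact H. }
    exists Htu. apply (@pos3 X F _ _ _ Ht). intros i. destruct (Hx i) as [H Hi].
    rewrite (@res_comp X F _ _ _ Htu (is_join_le Ht i) H). exact Hi.
  - intros t x y Hyx [H Hx]. exists H. eapply ple_trans; eauto.
Defined.

(** * Completeness: down : F -> D F has a left adjoint, i.e. an order-preserving
    morphism of sheaves  alpha : D F -> F  with  alpha -| down  on points. *)
Definition complete (X : Frame) (F : Posheaf X) : Prop :=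
  exists alpha : forall u : X, Downsheaf F u -> F u,
    (forall u v (H : fle v u) (G : Downsheaf F u),
        alpha v (ds_restr H G) = res F H (alpha u G)) /\
    (forall u (G G' : Downsheaf F u), ds_incl G G' -> pleF F (alpha u G) (alpha u G')) /\
    (forall (u : X) (G : Downsheaf F u) (w : X) (y : F w),
        point_le (existT (fun a => F a) u (alpha u G)) (existT (fun a => F a) w y) <->
        dpoint_le (existT (fun a => Downsheaf F a) u G)
                  (existT (fun a => Downsheaf F a) w (down y))).

(* If alpha -| down witnesses completeness of F, then F^op is complete: the
   join in F^op (i.e. the meet in F) of a downsheaf G of F^op is alpha applied
   to the downsheaf of lower bounds of G.  Since (F^op)^op = F this gives both
   directions. *)
From Stdlib Require Import ProofIrrelevance.

Lemma res_irr (X : Frame) (F : Posheaf X) u v (H H' : fle v u) (x : F u) :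
  res F H x = res F H' x.
Proof.
  rewrite <- (res_comp X F u v v H (fle_refl X v) H' x).
  symmetry; apply res_id.
Qed.

Lemma is_join_meet (X : Frame) (I : Type) (f : I -> X) (s v : X) :
  fle s v -> is_join f v -> is_join (fun i => fmeet X s (f i)) s.
Proof.
  intros Hs Hv. unfold is_join in *. apply fle_antisym.
  - assert (E : s = fmeet X s v).
    { apply fle_antisym; [apply fmeet_glb; [apply fle_refl | exact Hs] | apply fmeet_l]. }
    rewrite E at 1. rewrite Hv, fdistr. apply fsup_least.
    intros a [s' [[i <-] ->]]. apply fsup_ub. exists i. reflexivity.
  - apply fsup_least. intros a [i <-]. apply fmeet_l.
Qed.

Lemma Pop_Pop (X : Frame) (F : Posheaf X) : Pop (Pop F) = F.
Proof. destruct F. unfold Pop. simpl. f_equal; apply proof_irrelevance. Qed.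

Section LowerBounds.

Variables (X : Frame) (F : Posheaf X).

Definition lower_bounds {u : X} (G : Downsheaf (Pop F) u) : Downsheaf F u.
Proof.
  refine {| ds := fun t y => fle t u /\
     forall s (H : fle s t) (x : F s), G s x -> pleF F (res F H y) x |}.
  - intros t y [H _]. exact H.
  - intros t w Hwt y [Htu Hy]. split.
    + eapply fle_trans; eauto.
    + intros s H x Gx. rewrite (res_comp X F t w s Hwt H (fle_trans _ _ _ _ H Hwt) y).
      apply Hy. exact Gx.
  - intros I f v Hv y Hy.
    assert (Hvu : fle v u).
    { rewrite Hv. apply fsup_least. intros a [i <-]. apply (proj1 (Hy i)). }
    split; [exact Hvu|].
    intros s H x Gx.
    (* check [y|s <= x] locally on the cover of [s] by the [s /\ f i] *)
    pose proof (is_join_meet X I f s v H Hv) as Hc.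
    apply (pos3 X F I _ s Hc). intros i.
    assert (Hmv : fle (fmeet X s (f i)) v) by (eapply fle_trans; [apply fmeet_l | exact H]).
    rewrite (res_comp X F v s _ H (is_join_le Hc i) Hmv y).
    rewrite <- (res_comp X F v (f i) _ (is_join_le Hv i) (fmeet_r X s (f i)) Hmv y).
    apply (proj2 (Hy i)). apply (ds_res G). exact Gx.
  - intros t y y' Hy'y [Htu Hy]. split; [exact Htu|].
    intros s H x Gx. eapply ple_trans; [apply res_mono; exact Hy'y | apply Hy; exact Gx].
Defined.

Lemma lower_bounds_restr u v (H : fle v u) (G : Downsheaf (Pop F) u) t y :
  lower_bounds (ds_restr H G) t y <-> ds_restr H (lower_bounds G) t y.
Proof.
  split.
  - intros [Htv Hy]. split; [split|exact Htv].
    + eapply fle_trans; eauto.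
    + intros s Hs x Gx. apply Hy. split; [exact Gx|]. eapply fle_trans; eauto.
  - intros [[Htu Hy] Htv]. split; [exact Htv|].
    intros s Hs x [Gx _]. apply Hy; exact Gx.
Qed.

Lemma lower_bounds_anti u (G G' : Downsheaf (Pop F) u) :
  ds_incl G G' -> ds_incl (lower_bounds G') (lower_bounds G).
Proof.
  intros Hi t y [Htu Hy]. split; [exact Htu|]. intros s Hs x Gx. apply Hy, Hi, Gx.
Qed.

Lemma lower_bounds_incl_down u (G : Downsheaf (Pop F) u) t x (Gx : G t x) :
  ds_incl (ds_restr (ds_dom G t x Gx) (lower_bounds G)) (@down X F t x).
Proof.
  intros s z [[_ Hz] Hst]. exists Hst.
  pose proof (Hz s (fle_refl X s) (res F Hst x) (ds_res G _ _ Hst x Gx)) as Hz'.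
  rewrite res_id in Hz'. exact Hz'.
Qed.

End LowerBounds.

Arguments lower_bounds {X F u} G.

Section LeftAdjoint.

Variables (X : Frame) (F : Posheaf X) (alpha : forall u : X, Downsheaf F u -> F u).

Hypothesis alpha_mono :
  forall u (G G' : Downsheaf F u), ds_incl G G' -> pleF F (alpha u G) (alpha u G').
Hypothesis alpha_adj :
  forall (u : X) (G : Downsheaf F u) (w : X) (y : F w),
    point_le (existT (fun a => F a) u (alpha u G)) (existT (fun a => F a) w y) <->
    dpoint_le (existT (fun a => Downsheaf F a) u G)
              (existT (fun a => Downsheaf F a) w (down y)).

Lemma left_adjoint_ext u (G G' : Downsheaf F u) :
  (forall t y, G t y <-> G' t y) -> alpha u G = alpha u G'.
Proof.
  intros E. apply ple_antisym; apply alpha_mono; intros t y; apply E.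
Qed.

Lemma left_adjoint_le_of_incl_down u (G : Downsheaf F u) (z : F u) :
  ds_incl G (down z) -> pleF F (alpha u G) z.
Proof.
  intros Hi.
  assert (A : dpoint_le (existT (fun a => Downsheaf F a) u G)
                        (existT (fun a => Downsheaf F a) u (down z))).
  { exists (fle_refl X u). intros t y Gy. split; [apply Hi, Gy | exact (ds_dom G t y Gy)]. }
  apply (proj2 (alpha_adj _ _ _ _)) in A. destruct A as [H0 A]. simpl in A.
  rewrite res_id in A. exact A.
Qed.

Lemma le_left_adjoint u (G : Downsheaf F u) (y : F u) :
  G u y -> pleF F y (alpha u G).
Proof.
  intros Gy.
  assert (A : point_le (existT (fun a => F a) u (alpha u G))
                       (existT (fun a => F a) u (alpha u G))).
  { exists (fle_refl X u). simpl. rewrite res_id. apply ple_refl. }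
  apply (proj1 (alpha_adj _ _ _ _)) in A. destruct A as [H0 A].
  destruct (A u y Gy) as [[H C] _]. simpl in C. rewrite res_id in C. exact C.
Qed.

End LeftAdjoint.

Lemma complete_op (X : Frame) (F : Posheaf X) : complete F -> complete (Pop F).
Proof.
  intros [alpha [Hnat [Hmono Hadj]]].
  exists (fun u G => alpha u (lower_bounds G)).
  split; [|split].
  - intros u v H G. simpl. rewrite <- Hnat.
    apply (left_adjoint_ext X F alpha Hmono). apply lower_bounds_restr.
  - intros u G G' Hi. simpl. apply Hmono, lower_bounds_anti, Hi.
  - intros u G w y. unfold point_le, dpoint_le, ds_incl; simpl. split.
    + intros [H Hle]. exists H. intros t x Gx.
      pose proof (ds_dom G t x Gx) as Htu.
      split; [|exact Htu]. exists (fle_trans _ _ _ _ Htu H).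
      rewrite <- (res_comp X F w u t H Htu).
      eapply ple_trans; [apply res_mono; exact Hle|].
      rewrite (res_irr X F _ _ Htu (ds_dom G t x Gx)), <- Hnat.
      apply (left_adjoint_le_of_incl_down X F alpha Hadj), lower_bounds_incl_down.
    + intros [H Hin]. exists H. apply (le_left_adjoint X F alpha Hadj). split; [apply fle_refl|].
      intros s Hs x Gx.
      rewrite (res_comp X F w u s H Hs (fle_trans _ _ _ _ Hs H)).
      destruct (Hin s x Gx) as [[Ht Hle] _]. rewrite (res_irr X F _ _ _ Ht). exact Hle.
Qed.

Theorem corollary3p1 (X : Frame) (F : Posheaf X) :
  complete F <-> complete (Pop F).
Proof.
  split.
  - apply complete_op.
  - intros H. rewrite <- (Pop_Pop X F). apply complete_op. exact H.
Qed.
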